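(* Let $A_i=\begin{pmatrix}a_i&c_i\\ c_i&b_i\end{pmatrix}$, $i=1,2$, be $2\times2$ positive semidefinite matrices with non-negative real entries. If $a_1\le a_2$, $b_1\le b_2$ and $c_1\le c_2$, then $|||A_1|||\le|||A_2|||$ for every unitarily invariant norm $|||\cdot|||$. *)

From HB Require Import structures.
From mathcomp Require Import all_boot all_order all_algebra.
Set Implicit Arguments. Unset Strict Implicit. Unset Printing Implicit Defensive.
Import Order.TTheory GRing.Theory Num.Theory.
Local Open Scope ring_scope.

Definition adjmx (C : numClosedFieldType) m n (A : 'M[C]_(m, n)) : 'M[C]_(n, m) :=
  (map_mx Num.conj A)^T.

Definition unitary (C : numClosedFieldType) n (U : 'M[C]_n) : Prop :=
  U *m adjmx U = 1%:M.

(* A matrix norm on 'M[C]_n; values lie in C and are nonnegative (hence real). *)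
Definition is_matrix_norm (C : numClosedFieldType) n (N : 'M[C]_n -> C) : Prop :=
  [/\ forall A, 0 <= N A,
      forall A, N A = 0 -> A = 0,
      forall (a : C) A, N (a *: A) = `|a| * N A
    & forall A B, N (A + B) <= N A + N B].

Definition unitarily_invariant_norm (C : numClosedFieldType) n (N : 'M[C]_n -> C)
  : Prop :=
  is_matrix_norm N /\
  forall U V A, unitary U -> unitary V -> N (U *m A *m V) = N A.

Definition psd (C : numClosedFieldType) n (A : 'M[C]_n) : Prop :=
  adjmx A = A /\ forall x : 'cV[C]_n, 0 <= (adjmx x *m A *m x) 0 0.

Definition sym2 (C : numClosedFieldType) (a b c : C) : 'M[C]_2 :=
  \matrix_(i < 2, j < 2)
    (if (i == 0 :> nat) && (j == 0 :> nat) then a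
     else if (i == 1 :> nat) && (j == 1 :> nat) then b else c).

From mathcomp Require Import all_boot all_order all_algebra.
From mathcomp Require Import ring.
Set Implicit Arguments. Unset Strict Implicit. Unset Printing Implicit Defensive.
Import Order.TTheory GRing.Theory Num.Theory.
Local Open Scope ring_scope.

(* A unitarily invariant norm N of a real symmetric 2x2 matrix only depends on
   its eigenvalues l1 >= l2, through g(l1, l2) := N(diag(l1, l2)).  The function
   g is symmetric and even in each variable, so convexity of N makes it
   nondecreasing in each nonnegative argument and Schur-convex; hence
   g(l) <= g(m) as soon as 0 <= l2, l1 <= m1 and l1 + l2 <= m1 + m2.  For A1, A2
   as in the theorem, l2 >= 0 because A1 is positive semidefinite, the traces
   compare entrywise, and the largest eigenvalue is monotone in the entries
   because the off-diagonal entries are nonnegative. *)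

Section Matrix2.
Variable C : numClosedFieldType.

Definition mx2 (p q r s : C) : 'M[C]_2 := \matrix_(i < 2, j < 2)
  if i == 0 :> nat then (if j == 0 :> nat then p else q)
  else (if j == 0 :> nat then r else s).

Lemma mx2_mul a b c d e f g h : mx2 a b c d *m mx2 e f g h =
  mx2 (a * e + b * g) (a * f + b * h) (c * e + d * g) (c * f + d * h).
Proof.
apply/matrixP => i j; rewrite !mxE !big_ord_recl big_ord0 !mxE addr0.
by case: i => [[|[|i]] Hi] //; case: j => [[|[|j]] Hj].
Qed.

Lemma adjmx_mx2 a b c d : adjmx (mx2 a b c d) = mx2 a^* c^* b^* d^*.
Proof.
apply/matrixP => i j; rewrite !mxE.
by case: i => [[|[|i]] Hi] //; case: j => [[|[|j]] Hj].
Qed.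

Lemma mx2_add a b c d e f g h :
  mx2 a b c d + mx2 e f g h = mx2 (a + e) (b + f) (c + g) (d + h).
Proof.
apply/matrixP => i j; rewrite !mxE.
by case: i => [[|[|i]] Hi] //; case: j => [[|[|j]] Hj].
Qed.

Lemma scale_mx2 k a b c d : k *: mx2 a b c d = mx2 (k * a) (k * b) (k * c) (k * d).
Proof.
apply/matrixP => i j; rewrite !mxE.
by case: i => [[|[|i]] Hi] //; case: j => [[|[|j]] Hj].
Qed.

Lemma mx2_1 : 1%:M = mx2 1 0 0 1.
Proof.
apply/matrixP => i j; rewrite !mxE.
by case: i => [[|[|i]] Hi] //; case: j => [[|[|j]] Hj].
Qed.

Lemma sym2_mx2 a b c : sym2 a b c = mx2 a c c b.
Proof.
apply/matrixP => i j; rewrite !mxE.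
by case: i => [[|[|i]] Hi] //; case: j => [[|[|j]] Hj].
Qed.

Lemma unitary_mx2 a b c d :
  a \is Num.real -> b \is Num.real -> c \is Num.real -> d \is Num.real ->
  a * a + b * b = 1 -> a * c + b * d = 0 -> c * c + d * d = 1 ->
  unitary (mx2 a b c d).
Proof.
move=> ra rb rc rd h1 h2 h3.
rewrite /unitary adjmx_mx2 mx2_mul mx2_1 !conj_Creal //.
by congr mx2; rewrite // -h2 mulrC [b * _]mulrC.
Qed.

Lemma unitary_rot x y : x \is Num.real -> y \is Num.real -> x * x + y * y = 1 ->
  unitary (mx2 x (- y) y x) /\ unitary (mx2 x y (- y) x).
Proof.
move=> rx ry xy1; split; apply: unitary_mx2; rewrite ?rpredN //;
  by [ring | rewrite -xy1; ring].
Qed.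

Lemma mx2_rot_conj x y l1 l2 :
  mx2 x (- y) y x *m sym2 l1 l2 0 *m mx2 x y (- y) x =
  mx2 (l1 * (x * x) + l2 * (y * y)) ((l1 - l2) * (x * y))
      ((l1 - l2) * (x * y)) (l1 * (y * y) + l2 * (x * x)).
Proof. by rewrite sym2_mx2 !mx2_mul; congr mx2; ring. Qed.

Definition col2 (p q : C) : 'cV[C]_2 := \col_(i < 2) (if i == 0 :> nat then p else q).

Lemma sym2_qform a b c p q : p \is Num.real -> q \is Num.real ->
  (adjmx (col2 p q) *m sym2 a b c *m col2 p q) 0 0 =
  a * p ^+ 2 + 2 * c * p * q + b * q ^+ 2.
Proof.
move=> rp rq; rewrite /adjmx !mxE !big_ord_recl !big_ord0 !mxE.
by rewrite !big_ord_recl !big_ord0 !mxE /= !conj_Creal //; ring.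
Qed.

End Matrix2.

Section Sym2Spectrum.
Variable C : numClosedFieldType.
Implicit Types a b c u : C.

Lemma normr_le_sqrtC_sqrD u c : u \is Num.real -> c \is Num.real ->
  `|u| <= sqrtC (u ^+ 2 + c ^+ 2).
Proof.
move=> ru rc; rewrite -(sqrCK (normr_ge0 u)) real_normK // ler_sqrtC //.
  by rewrite lerDl real_exprn_even_ge0.
by rewrite nnegrE real_exprn_even_ge0.
by rewrite nnegrE addr_ge0 ?real_exprn_even_ge0.
Qed.

Lemma sqrtC_sqrD_pm_ge0 u c : u \is Num.real -> c \is Num.real ->
  0 <= sqrtC (u ^+ 2 + c ^+ 2) + u /\ 0 <= sqrtC (u ^+ 2 + c ^+ 2) - u.
Proof.
move=> ru rc; have := normr_le_sqrtC_sqrD ru rc; set r := sqrtC _ => le_ur.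
split; last by rewrite subr_ge0 (le_trans _ le_ur) ?real_ler_norm.
by rewrite -[u]opprK subr_ge0 (le_trans _ le_ur) // -normrN real_ler_norm ?rpredN.
Qed.

Lemma sym2_rotation_diag t u c : u \is Num.real -> c \is Num.real ->
  let r := sqrtC (u ^+ 2 + c ^+ 2) in
  exists x y, [/\ x \is Num.real, y \is Num.real, x * x + y * y = 1 &
    sym2 (t + u) (t - u) c = mx2 x (- y) y x *m sym2 (t + r) (t - r) 0 *m mx2 x y (- y) x].
Proof.
move=> ru rc r; have [ru_ge0 _] := sqrtC_sqrD_pm_ge0 ru rc; rewrite -/r in ru_ge0.
have c2E : c ^+ 2 = r ^+ 2 - u ^+ 2 by rewrite sqrtCK addrC addKr.
have [ru0 | ru_neq0] := eqVneq (r + u) 0.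
  (* Then c = 0 and u <= 0: the matrix is diagonal with its eigenvalues in
     increasing order, and a rotation by a right angle swaps them. *)
  have rE : r = - u by apply/eqP; rewrite -addr_eq0 ru0.
  have c0 : c = 0 by apply/eqP; rewrite -sqrf_eq0 c2E rE sqrrN subrr.
  exists 0, 1; split; rewrite ?real0 ?real1 ?mx2_rot_conj ?sym2_mx2 ?rE ?c0 //; first by ring.
  by congr mx2; ring.
have r_neq0 : r != 0.
  apply: contraNneq ru_neq0 => r0; have := normr_le_sqrtC_sqrD ru rc.
  by rewrite -/r r0 normr_le0 => /eqP u0; rewrite u0 addr0.
have r_ge0 : 0 <= r by rewrite sqrtC_ge0 addr_ge0 ?real_exprn_even_ge0.
have n2_ge0 : 0 <= 2 * r * (r + u) by rewrite !mulr_ge0 ?ler0n.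
set n := sqrtC (2 * r * (r + u)).
have nnE : n * n = 2 * r * (r + u) by rewrite -expr2 sqrtCK.
have rn : n \is Num.real by apply: sqrtC_real.
have n_neq0 : n != 0 by rewrite -sqrf_eq0 expr2 nnE !mulf_neq0 ?pnatr_eq0.
exists ((u + r) / n), (c / n).
have denom_neq0 : (r != 0) && (r + u != 0) by rewrite r_neq0 ru_neq0.
have xxE : (u + r) / n * ((u + r) / n) = (u + r) / (2 * r) by rewrite mulf_div nnE; field.
have yyE : c / n * (c / n) = (r - u) / (2 * r) by rewrite mulf_div nnE -expr2 c2E; field.
have xyE : (u + r) / n * (c / n) = c / (2 * r) by rewrite mulf_div nnE; field.
split; rewrite ?realM ?realV ?realD ?(ger0_real r_ge0) //; first by rewrite xxE yyE; field.
by rewrite mx2_rot_conj xxE yyE xyE sym2_mx2; congr mx2; field.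
Qed.

Lemma psd_sym2_det a b c : a \is Num.real -> b \is Num.real -> c \is Num.real ->
  psd (sym2 a b c) -> c ^+ 2 <= a * b.
Proof.
move=> ra rb rc [_ psdA].
have qform_ge0 p q : p \is Num.real -> q \is Num.real ->
    0 <= a * p ^+ 2 + 2 * c * p * q + b * q ^+ 2.
  by move=> rp rq; rewrite -sym2_qform.
have [a0 | a_neq0] := eqVneq a 0.
  have : 0 <= - (4 * c ^+ 2).
    have -> : - (4 * c ^+ 2) = a * (- (b + 1)) ^+ 2 + 2 * c * - (b + 1) * (2 * c)
        + b * (2 * c) ^+ 2 by rewrite a0; ring.
    by rewrite qform_ge0 ?rpredN ?rpredD ?rpredM ?real1 ?realn.
  by rewrite a0 mul0r oppr_ge0 pmulr_rle0 ?ltr0n.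
have a_ge0 : 0 <= a.
  have -> : a = a * 1 ^+ 2 + 2 * c * 1 * 0 + b * 0 ^+ 2 by ring.
  by rewrite qform_ge0 ?real0 ?real1.
have : 0 <= a * (a * b - c ^+ 2).
  have -> : a * (a * b - c ^+ 2) = a * c ^+ 2 + 2 * c * c * - a + b * (- a) ^+ 2 by ring.
  by rewrite qform_ge0 ?rpredN.
by rewrite pmulr_rge0 ?subr_ge0 // lt_def a_neq0.
Qed.

Definition sym2_radius a b c := sqrtC (((a - b) / 2) ^+ 2 + c ^+ 2).
Definition sym2_eig1 a b c := (a + b) / 2 + sym2_radius a b c.
Definition sym2_eig2 a b c := (a + b) / 2 - sym2_radius a b c.

Lemma real_half (x : C) : x \is Num.real -> x / 2 \is Num.real.
Proof. by move=> rx; rewrite realM ?realV ?realn. Qed.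

Lemma sym2_eigD a b c : sym2_eig1 a b c + sym2_eig2 a b c = a + b.
Proof. by rewrite /sym2_eig1 /sym2_eig2; field. Qed.

Lemma sym2_eig2_le1 a b c : a \is Num.real -> b \is Num.real -> c \is Num.real ->
  sym2_eig2 a b c <= sym2_eig1 a b c.
Proof.
move=> ra rb rc; rewrite lerD2l -subr_ge0 opprK -mulr2n mulrn_wge0 //.
by rewrite sqrtC_ge0 addr_ge0 ?real_exprn_even_ge0 ?real_half ?realB.
Qed.

Lemma sym2_eig2_ge0 a b c : 0 <= a -> 0 <= b -> c \is Num.real ->
  c ^+ 2 <= a * b -> 0 <= sym2_eig2 a b c.
Proof.
move=> a_ge0 b_ge0 rc det_ge0.
have t_ge0 : 0 <= (a + b) / 2 by rewrite divr_ge0 ?addr_ge0 ?ler0n.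
have ru : (a - b) / 2 \is Num.real by rewrite real_half ?realB ?ger0_real.
rewrite subr_ge0 /sym2_radius -(sqrCK t_ge0) ler_sqrtC ?nnegrE ?exprn_ge0 //; last first.
  by rewrite addr_ge0 ?real_exprn_even_ge0.
by rewrite -subr_ge0 (_ : _ - _ = a * b - c ^+ 2) ?subr_ge0 //; field.
Qed.

Lemma sym2_eig1_le a1 b1 c1 a2 b2 c2 :
  a1 \is Num.real -> b1 \is Num.real -> a2 \is Num.real -> b2 \is Num.real ->
  0 <= c1 -> a1 <= a2 -> b1 <= b2 -> c1 <= c2 ->
  sym2_eig1 a1 b1 c1 <= sym2_eig1 a2 b2 c2.
Proof.
move=> ra1 rb1 ra2 rb2 c1_ge0 le_a le_b le_c.
have rc1 := ger0_real c1_ge0.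
have c2_ge0 := le_trans c1_ge0 le_c; have rc2 := ger0_real c2_ge0.
rewrite /sym2_eig1 /sym2_radius.
set t1 := (a1 + b1) / 2; set u1 := (a1 - b1) / 2.
set t2 := (a2 + b2) / 2; set u2 := (a2 - b2) / 2.
have ru1 : u1 \is Num.real by rewrite real_half ?realB.
have ru2 : u2 \is Num.real by rewrite real_half ?realB.
have [r2Du_ge0 r2Bu_ge0] := sqrtC_sqrD_pm_ge0 ru2 rc2.
set r2 := sqrtC (u2 ^+ 2 + c2 ^+ 2) in r2Du_ge0 r2Bu_ge0 *.
have r2_ge0 : 0 <= r2 by rewrite sqrtC_ge0 addr_ge0 ?real_exprn_even_ge0.
have le_t : t1 <= t2 by rewrite ler_wpM2r ?invr_ge0 ?ler0n ?lerD.
have X_ge0 : 0 <= t2 - t1 + r2 by rewrite addr_ge0 ?subr_ge0.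
rewrite -lerBrDl addrAC -(sqrCK X_ge0) ler_sqrtC ?nnegrE ?exprn_ge0 //; last first.
  by rewrite addr_ge0 ?real_exprn_even_ge0.
(* Expanding with r2^2 = u2^2 + c2^2 leaves a sum of products of nonnegative terms. *)
have -> : (t2 - t1 + r2) ^+ 2 = u1 ^+ 2 + c1 ^+ 2 + ((a2 - a1) * (b2 - b1)
    + (a2 - a1) * (r2 + u2) + (b2 - b1) * (r2 - u2) + (c2 - c1) * (c2 + c1)).
  apply: (addIr (- r2 ^+ 2)); rewrite [in RHS](sqrtCK (u2 ^+ 2 + c2 ^+ 2)).
  by rewrite /t1 /t2 /u1 /u2; field.
rewrite lerDl; apply: addr_ge0; [apply: addr_ge0; [apply: addr_ge0 |] |].
all: by apply: mulr_ge0 => //; rewrite ?subr_ge0 ?addr_ge0.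
Qed.

End Sym2Spectrum.

Lemma norm_mix_le (C : numClosedFieldType) n (N : 'M[C]_n -> C) (k : C) A B :
  is_matrix_norm N -> 0 <= k -> k <= 1 -> N A = N B ->
  N (k *: A + (1 - k) *: B) <= N B.
Proof.
move=> [_ _ NZ ND] k_ge0 k_le1 NAB; apply: le_trans (ND _ _) _.
by rewrite !NZ !ger0_norm ?subr_ge0 // NAB -mulrDl addrC subrK mul1r.
Qed.

Section UnitarilyInvariantNorm.
Variables (C : numClosedFieldType) (N : 'M[C]_2 -> C).
Hypothesis N_ui : unitarily_invariant_norm N.

Definition Ndiag (x y : C) := N (sym2 x y 0).

Lemma NdiagC x y : Ndiag x y = Ndiag y x.
Proof.
have swap_unitary : unitary (mx2 0 1 1 0 : 'M[C]_2).
  by apply: unitary_mx2; rewrite ?real0 ?real1 //; ring.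
rewrite /Ndiag -(N_ui.2 _ _ _ swap_unitary swap_unitary).
by congr N; rewrite !sym2_mx2 !mx2_mul; congr mx2; ring.
Qed.

Lemma NdiagNl x y : Ndiag (- x) y = Ndiag x y.
Proof.
have flip_unitary : unitary (mx2 (-1) 0 0 1 : 'M[C]_2).
  by apply: unitary_mx2; rewrite ?realN ?real0 ?real1 //; ring.
have id_unitary : unitary (mx2 1 0 0 1 : 'M[C]_2).
  by apply: unitary_mx2; rewrite ?real0 ?real1 //; ring.
rewrite /Ndiag -(N_ui.2 _ _ _ flip_unitary id_unitary).
by congr N; rewrite !sym2_mx2 !mx2_mul; congr mx2; ring.
Qed.

(* diag(x, y) is a convex combination of diag(x', y) and diag(-x', y). *)
Lemma Ndiag_monol x x' y : 0 <= x -> x <= x' -> Ndiag x y <= Ndiag x' y.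
Proof.
move=> x_ge0 le_xx'; have x'_ge0 := le_trans x_ge0 le_xx'.
have [x'0 | x'_neq0] := eqVneq x' 0.
  by have -> : x = x' by apply/le_anti; rewrite le_xx' x'0 x_ge0.
set k := (x' - x) / (2 * x').
have k_ge0 : 0 <= k by rewrite divr_ge0 ?subr_ge0 ?mulr_ge0 ?ler0n.
have k_le1 : k <= 1.
  rewrite ler_pdivrMr ?mulr_gt0 ?ltr0n ?lt_def ?x'_neq0 // mul1r.
  by rewrite -subr_ge0 (_ : _ - _ = x' + x) ?addr_ge0 //; ring.
have := norm_mix_le N_ui.1 k_ge0 k_le1 (NdiagNl x' y).
congr (_ <= _); congr N; rewrite !sym2_mx2 !scale_mx2 mx2_add.
by congr mx2; rewrite /k; field.
Qed.

Lemma Ndiag_monor x y y' : 0 <= y -> y <= y' -> Ndiag x y <= Ndiag x y'.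
Proof. by move=> y_ge0 le_yy'; rewrite NdiagC [Ndiag x y']NdiagC Ndiag_monol. Qed.

(* diag(l, m1 + m2 - l) is a convex combination of diag(m1, m2) and diag(m2, m1). *)
Lemma Ndiag_schur l m1 m2 : m2 <= l -> l <= m1 -> Ndiag l (m1 + m2 - l) <= Ndiag m1 m2.
Proof.
move=> le_m2l le_lm1.
have [m12 | m12_neq] := eqVneq m1 m2.
  have -> : l = m1 by apply/le_anti; rewrite le_lm1 m12 le_m2l.
  by rewrite addrAC subrr add0r.
have m12_gt0 : 0 < m1 - m2 by rewrite subr_gt0 lt_def m12_neq (le_trans le_m2l).
set k := (m1 - l) / (m1 - m2).
have k_ge0 : 0 <= k by apply: divr_ge0; [rewrite subr_ge0 | exact: ltW].
have k_le1 : k <= 1 by rewrite ler_pdivrMr // mul1r lerD2l lerN2.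
have := norm_mix_le N_ui.1 k_ge0 k_le1 (NdiagC m2 m1).
congr (_ <= _); congr N; rewrite !sym2_mx2 !scale_mx2 mx2_add.
have m12_neq0 : m1 - m2 != 0 by rewrite subr_eq0.
by congr mx2; rewrite /k; field.
Qed.

Lemma Ndiag_weak_majorization l1 l2 m1 m2 :
  0 <= l2 -> l2 <= l1 -> l1 <= m1 -> l1 + l2 <= m1 + m2 ->
  Ndiag l1 l2 <= Ndiag m1 m2.
Proof.
move=> l2_ge0 le_l21 le_l1m1 le_trace; have l1_ge0 := le_trans l2_ge0 le_l21.
have m1_real : m1 \is Num.real := ger0_real (le_trans l1_ge0 le_l1m1).
have m2_real : m2 \is Num.real.
  have m12_real := ger0_real (le_trans (addr_ge0 l1_ge0 l2_ge0) le_trace).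
  by rewrite -(addKr m1 m2) rpredD ?rpredN.
case/orP: (real_leVge m2_real (ger0_real l1_ge0)) => [le_m2l1 | le_l1m2].
  apply: le_trans (Ndiag_schur le_m2l1 le_l1m1).
  by apply: Ndiag_monor; rewrite // lerBrDl.
apply: le_trans (Ndiag_monol _ l1_ge0 le_l1m1) _.
exact: Ndiag_monor l2_ge0 (le_trans le_l21 le_l1m2).
Qed.

Lemma Ndiag_spectral a b c : a \is Num.real -> b \is Num.real -> c \is Num.real ->
  N (sym2 a b c) = Ndiag (sym2_eig1 a b c) (sym2_eig2 a b c).
Proof.
move=> ra rb rc; have ru : (a - b) / 2 \is Num.real by rewrite real_half ?realB.
have [x [y [rx ry xy1 A_rot]]] := sym2_rotation_diag ((a + b) / 2) ru rc.
have [U_unitary V_unitary] := unitary_rot rx ry xy1.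
have -> : sym2 a b c = sym2 ((a + b) / 2 + (a - b) / 2) ((a + b) / 2 - (a - b) / 2) c.
  by congr sym2; field.
by rewrite A_rot N_ui.2.
Qed.

End UnitarilyInvariantNorm.

Theorem mainTheorem10 (C : numClosedFieldType)
  (a1 b1 c1 a2 b2 c2 : C)
  (ha1 : 0 <= a1) (hb1 : 0 <= b1) (hc1 : 0 <= c1)
  (ha2 : 0 <= a2) (hb2 : 0 <= b2) (hc2 : 0 <= c2)
  (hA1 : psd (sym2 a1 b1 c1)) (hA2 : psd (sym2 a2 b2 c2))
  (hab : a1 <= a2) (hbb : b1 <= b2) (hcc : c1 <= c2) :
  forall N : 'M[C]_2 -> C, unitarily_invariant_norm N ->
    N (sym2 a1 b1 c1) <= N (sym2 a2 b2 c2).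
Proof.
move=> N N_ui.
have [ra1 rb1 rc1] : [/\ a1 \is Num.real, b1 \is Num.real & c1 \is Num.real].
  by split; apply: ger0_real.
have [ra2 rb2 rc2] : [/\ a2 \is Num.real, b2 \is Num.real & c2 \is Num.real].
  by split; apply: ger0_real.
rewrite !(Ndiag_spectral N_ui) //; apply: (Ndiag_weak_majorization N_ui).
- exact: sym2_eig2_ge0 ha1 hb1 rc1 (psd_sym2_det ra1 rb1 rc1 hA1).
- exact: sym2_eig2_le1.
- exact: sym2_eig1_le.
- by rewrite !sym2_eigD lerD.
Qed.
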